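(* Let $n\ge 1$ and $m$ be integers with $n-|m|$ even and non-negative, let $R_n^{|m|}(r)=r^{|m|}\,P^{(0,|m|)}_{\frac{n-|m|}{2}}(2r^2-1)$ for $0\le r\le1$, and let $k\ge1$ be an integer. Put \[ B_{n,k}=\frac{n^2(n^2-1^2)\cdots(n^2-(k-1)^2)}{2^k\,(1/2)_k},\qquad a_n=2\Bigl(\tfrac12\Bigr)^n\binom{n}{\frac{n-|m|}{2}}. \] Then $\max_{0\le r\le1}|(R_n^{|m|})^{(k)}(r)|$ is attained at $r=1$, and \[ a_n\,B_{n,k}\;\le\;(R_n^{|m|})^{(k)}(1)\;\le\;B_{n,k}. \]
   Context: $P_p^{(\alpha,\beta)}$ denotes the Jacobi polynomial of degree $p$ orthogonal with respect to the weight $(1-x)^\alpha(1+x)^\beta$ on $[-1,1]$, with standard normalization $P_p^{(\alpha,\beta)}(1)=\binom{p+\alpha}{p}$. $f^{(k)}$ denotes the $k$-th derivative. $(\alpha)_k=\alpha(\alpha+1)\cdots(\alpha+k-1)$ is the Pochhammer symbol, $(\alpha)_0=1$. *)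

From HB Require Import structures.
From mathcomp Require Import all_boot all_order all_algebra.
From mathcomp Require Import reals.
Set Implicit Arguments. Unset Strict Implicit. Unset Printing Implicit Defensive.
Import Order.TTheory GRing.Theory Num.Theory.
Local Open Scope ring_scope.

(* Jacobi polynomial P_p^{(alpha,beta)} for nonnegative integer parameters,
   with the standard normalization P(1) = binom(p+alpha, p), given by the
   explicit formula (Szego (4.3.2) / DLMF 18.5.8):
   P_p^{(a,b)}(x) = sum_{s=0}^p C(p+a, p-s) C(p+b, s) ((x-1)/2)^s ((x+1)/2)^(p-s). *)
Definition jacobi {R : fieldType} (p a b : nat) : {poly R} :=
  \sum_(s < p.+1)
     ((('C(p + a, p - s) * 'C(p + b, s))%N)%:R
       *: ((2^-1 *: ('X - 1)) ^+ s * (2^-1 *: ('X + 1)) ^+ (p - s))).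

Definition zernikeR {R : fieldType} (n M : nat) : {poly R} :=
  'X ^+ M * (jacobi ((n - M) %/ 2) 0 M \Po (2%:R *: 'X ^+ 2 - 1)).

Definition pochhammer {R : ringType} (x : R) (k : nat) : R :=
  \prod_(i < k) (x + i%:R).

Definition Bnk {R : fieldType} (n k : nat) : R :=
  (\prod_(j < k) ((n%:R) ^+ 2 - (j%:R) ^+ 2))
    / (2%:R ^+ k * pochhammer (2^-1 : R) k).

Definition a_coef {R : fieldType} (n M : nat) : R :=
  2%:R * (2^-1) ^+ n * ('C(n, (n - M) %/ 2))%:R.

From HB Require Import structures.
From mathcomp Require Import all_boot all_order all_algebra.
From mathcomp Require Import reals.
From mathcomp Require Import ring lra zify.

(* Under the Joukowski substitution x = (z + z^-1)/2 one has
   T_k(x) = (z^k + z^-k)/2, while z^n R_n^M(x) is a polynomial in w = z^2 whose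
   coefficients, by the generating function of the Krawtchouk polynomials K_j,
   are c_j = C(n,j) K_j^2 / (2^n C(n,p)) >= 0 (here n = M + 2p).  Comparing with
   z -> z^-1 gives R_n^M = sum_j c_j T_(|n-2j|), with sum_j c_j = R_n^M(1) = 1 and
   c_0 + c_n = a_n.  Nonnegative combinations of the T_k are bounded on [-1,1] by
   their value at 1 and stay such combinations under differentiation, because
   T_k' = k U_(k-1) and U_(k-1) is a sum of T_i's.  Finally T_i^(k)(1) = B_(i,k),
   read off the Chebyshev differential equation at x = 1, is nonnegative and
   nondecreasing in i, so a_n B_(n,k) <= sum_j c_j B_(|n-2j|,k) <= B_(n,k). *)

Set Implicit Arguments.
Unset Strict Implicit.
Unset Printing Implicit Defensive.

Import Order.TTheory GRing.Theory Num.Theory.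
Local Open Scope ring_scope.

(* [chebTV k = (T_k, U_(k-1))], with the convention [U_(-1) = 0]. *)
Fixpoint chebTV {R : comNzRingType} (k : nat) : {poly R} * {poly R} :=
  if k is k'.+1 then
    let: (t, v) := chebTV k' in ('X * t + ('X ^+ 2 - 1) * v, t + 'X * v)
  else (1, 0).

Definition chebT {R : comNzRingType} k : {poly R} := (chebTV k).1.
Definition chebV {R : comNzRingType} k : {poly R} := (chebTV k).2.

Section Chebyshev.
Variable R : comNzRingType.
Implicit Types k n i : nat.

Lemma chebT0 : chebT (R := R) 0 = 1. Proof. by []. Qed.
Lemma chebV0 : chebV (R := R) 0 = 0. Proof. by []. Qed.

Lemma chebTS k : chebT (R := R) k.+1 = 'X * chebT k + ('X ^+ 2 - 1) * chebV k.
Proof. by rewrite /chebT /chebV /=; case: (chebTV k). Qed.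

Lemma chebVS k : chebV (R := R) k.+1 = chebT k + 'X * chebV k.
Proof. by rewrite /chebT /chebV /=; case: (chebTV k). Qed.

Lemma chebT_rec k : chebT (R := R) k.+2 = 'X * chebT k.+1 *+ 2 - chebT k.
Proof. by rewrite !chebTS !chebVS mulr2n; ring. Qed.

Lemma chebV_rec k : chebV (R := R) k.+2 = chebV k + chebT k.+1 *+ 2.
Proof. by rewrite !chebVS !chebTS mulr2n; ring. Qed.

Lemma chebT_pell k : chebT (R := R) k ^+ 2 - ('X ^+ 2 - 1) * chebV k ^+ 2 = 1.
Proof.
elim: k => [|k IHk]; first by rewrite chebT0 chebV0; ring.
by rewrite chebTS chebVS -[RHS]IHk; ring.
Qed.

Lemma horner_chebT1 k : (chebT k).[1] = 1 :> R.
Proof. by elim: k => [|k IHk]; rewrite ?chebT0 ?chebTS !hornerE ?IHk; ring. Qed.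

Let deriv_sqrX_sub1 : ('X ^+ 2 - 1 : {poly R})^`() = 'X *+ 2.
Proof. by rewrite derivB derivXn derivC subr0. Qed.

Lemma deriv_chebTV k :
  (chebT (R := R) k)^`() = chebV k *+ k /\
  ('X ^+ 2 - 1) * (chebV (R := R) k)^`() = chebT k *+ k - 'X * chebV k.
Proof.
elim: k => [|k [dT dV]].
  by rewrite chebT0 chebV0 -polyC1 derivC deriv0; split; ring.
rewrite chebTS chebVS !derivD !derivM derivX deriv_sqrX_sub1 dT.
split; first by rewrite dV; ring.
by rewrite mulrDr mulrDr [_ * ('X * _)]mulrCA dV; ring.
Qed.

Lemma deriv_chebT k : (chebT (R := R) k)^`() = chebV k *+ k.
Proof. exact: (deriv_chebTV k).1. Qed.

Lemma chebT_ode n i :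
  ('X ^+ 2 - 1) * (chebT (R := R) n)^`(i.+2) + 'X * (chebT n)^`(i.+1) *+ (2 * i).+1
  = (chebT n)^`(i) *+ n ^ 2 - (chebT n)^`(i) *+ i ^ 2.
Proof.
elim: i => [|i IHi].
  have [dT dV] := deriv_chebTV n.
  by rewrite derivn0 !derivnS derivn0 dT derivMn mulrnAr dV; ring.
have := congr1 deriv IHi.
rewrite !(deriv_sqrX_sub1, derivD, derivB, derivMn, derivMNn, derivM, derivX).
rewrite -!derivnS => /eqP; rewrite -subr_eq0 => /eqP dIHi.
by apply/eqP; rewrite -subr_eq0 -[X in _ == X]dIHi; apply/eqP; ring.
Qed.

Lemma horner_derivn_chebT1_rec n i :
  ((chebT n)^`(i.+1)).[1] *+ (2 * i).+1
  = ((chebT n)^`(i)).[1] *+ n ^ 2 - ((chebT n)^`(i)).[1] *+ i ^ 2 :> R.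
Proof.
have := congr1 (horner^~ 1) (chebT_ode n i).
by rewrite !(hornerD, hornerN, hornerMn, hornerM) !hornerE subrr mul0r add0r.
Qed.

End Chebyshev.

Section ChebyshevCone.
Variable R : realDomainType.
Implicit Types (p q : {poly R}) (x : R).

Lemma chebT_norm_le1 k x : -1 <= x <= 1 -> `|(chebT k).[x]| <= 1.
Proof.
move=> /andP[x_ge x_le].
have := congr1 (horner^~ x) (chebT_pell R k); rewrite !hornerE /= => pell_x.
have : (x ^+ 2 - 1) * (chebV k).[x] ^+ 2 <= 0 by apply: mulr_le0_ge0; nra.
rewrite expr2 mulrA => V_le0.
have T2_le1 : (chebT k).[x] ^+ 2 <= 1 by rewrite -pell_x -[leLHS]subr0 lerB.
by rewrite ler_norml; apply/andP; split; nra.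
Qed.

Inductive cheb_cone : {poly R} -> Prop :=
  | cheb_cone0 : cheb_cone 0
  | cheb_coneT c k p : 0 <= c -> cheb_cone p -> cheb_cone (c *: chebT k + p).

Lemma cheb_coneD p q : cheb_cone p -> cheb_cone q -> cheb_cone (p + q).
Proof.
move=> + cone_q; elim=> [|c k p' c_ge0 _ IHp]; first by rewrite add0r.
by rewrite -addrA; apply: cheb_coneT.
Qed.

Lemma cheb_coneZ a p : 0 <= a -> cheb_cone p -> cheb_cone (a *: p).
Proof.
move=> a_ge0; elim=> [|c k p' c_ge0 _ IHp]; first by rewrite scaler0; constructor.
by rewrite scalerDr scalerA; apply: cheb_coneT => //; apply: mulr_ge0.
Qed.

Lemma cheb_coneMn p m : cheb_cone p -> cheb_cone (p *+ m).
Proof. by rewrite -scaler_nat; apply: cheb_coneZ. Qed.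

Lemma cheb_cone_sum (I : Type) (r : seq I) (F : I -> {poly R}) :
  (forall i, cheb_cone (F i)) -> cheb_cone (\sum_(i <- r) F i).
Proof.
by move=> coneF; elim/big_rec: _ => [|i p _]; [constructor | apply: cheb_coneD].
Qed.

Lemma cheb_cone_chebT k : cheb_cone (chebT k).
Proof.
by rewrite -[chebT k]addr0 -[chebT k]scale1r; apply: cheb_coneT => //; constructor.
Qed.

Lemma cheb_cone_chebV k : cheb_cone (chebV k).
Proof.
suff: cheb_cone (chebV k) /\ cheb_cone (chebV k.+1) by case.
elim: k => [|k [coneVk coneVk1]].
  rewrite chebVS chebV0 mulr0 addr0; split; [constructor | exact: cheb_cone_chebT].
split; rewrite // chebV_rec; apply: cheb_coneD => //.
exact/cheb_coneMn/cheb_cone_chebT.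
Qed.

Lemma cheb_cone_deriv p : cheb_cone p -> cheb_cone p^`().
Proof.
elim=> [|c k p' c_ge0 _ IHp]; first by rewrite deriv0; constructor.
rewrite derivD derivZ deriv_chebT; apply: cheb_coneD => //.
exact/cheb_coneZ/cheb_coneMn/cheb_cone_chebV.
Qed.

Lemma cheb_cone_derivn p k : cheb_cone p -> cheb_cone p^`(k).
Proof.
move=> cone_p; elim: k => [|k IHk]; first by rewrite derivn0.
by rewrite derivnS; apply: cheb_cone_deriv.
Qed.

Lemma cheb_cone_norm_le p x : cheb_cone p -> -1 <= x <= 1 -> `|p.[x]| <= p.[1].
Proof.
move=> + x_in; elim=> [|c k p' c_ge0 _ IHp]; first by rewrite !hornerE normr0.
rewrite !hornerE horner_chebT1 mulr1 (le_trans (ler_normD _ _)) // lerD //.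
by rewrite normrM ger0_norm // ler_piMr // chebT_norm_le1.
Qed.

End ChebyshevCone.

Lemma prod_sqr_sub_eq0 (R : comNzRingType) n k :
  (n < k)%N -> \prod_(j < k) (n%:R ^+ 2 - j%:R ^+ 2) = 0 :> R.
Proof. by move=> lt_nk; rewrite (bigD1 (Ordinal lt_nk)) //= subrr mul0r. Qed.

Section Bnk.
Variable R : numFieldType.

Lemma pochhammer_gt0 (x : R) k : 0 < x -> 0 < pochhammer x k.
Proof. by move=> x_gt0; apply: prodr_gt0 => i _; rewrite ltr_wpDr. Qed.

Lemma Bnk_denom_gt0 k : 0 < 2%:R ^+ k * pochhammer (2^-1 : R) k.
Proof. by rewrite mulr_gt0 ?exprn_gt0 ?pochhammer_gt0 ?invr_gt0 ?ltr0n. Qed.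

Lemma BnkS n k :
  Bnk n k.+1 = Bnk n k * (n%:R ^+ 2 - k%:R ^+ 2) / (2 * k).+1%:R :> R.
Proof.
rewrite /Bnk /pochhammer !big_ord_recr /= -/(pochhammer _ k).
have -> : 2 ^+ k.+1 * (pochhammer 2^-1 k * (2^-1 + k%:R))
          = 2 ^+ k * pochhammer 2^-1 k * (2 * k).+1%:R :> R.
  have -> : (2 * k).+1%:R = 2 * (2^-1 + k%:R) :> R.
    by rewrite mulrDr mulfV ?pnatr_eq0 // -[(2 * k).+1]addn1 natrD natrM addrC.
  by rewrite exprS; ring.
by rewrite invfM !mulrA; congr (_ / _); rewrite mulrAC.
Qed.

Lemma horner_derivn_chebT1 n k : ((chebT n)^`(k)).[1] = Bnk n k :> R.
Proof.
elim: k => [|k IHk].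
  by rewrite derivn0 horner_chebT1 /Bnk /pochhammer !big_ord0 expr0 mulr1 divr1.
have odd_neq0 : (2 * k).+1%:R != 0 :> R by rewrite pnatr_eq0.
apply: (mulIf odd_neq0).
rewrite mulr_natr horner_derivn_chebT1_rec IHk BnkS divfK //.
by rewrite mulrBr -!natrX !mulr_natr.
Qed.

Lemma Bnk_num_ge0 n k : 0 <= \prod_(j < k) (n%:R ^+ 2 - j%:R ^+ 2) :> R.
Proof.
have [le_kn | lt_nk] := leqP k n; last by rewrite prod_sqr_sub_eq0.
apply: prodr_ge0 => j _; have le_jn : (j <= n)%N by rewrite ltnW ?(leq_trans _ le_kn).
by rewrite subr_ge0 -!natrX ler_nat leq_exp2r.
Qed.

Lemma Bnk_ge0 n k : 0 <= Bnk n k :> R.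
Proof. by rewrite divr_ge0 ?Bnk_num_ge0 ?ltW ?Bnk_denom_gt0. Qed.

Lemma Bnk_le i n k : (i <= n)%N -> Bnk i k <= Bnk n k :> R.
Proof.
move=> le_in; rewrite ler_pM2r ?invr_gt0 ?Bnk_denom_gt0 //.
have [le_ki | lt_ik] := leqP k i; last by rewrite prod_sqr_sub_eq0 ?Bnk_num_ge0.
apply: ler_prod => j _; have le_ji : (j <= i)%N by rewrite ltnW ?(leq_trans _ le_ki).
by rewrite subr_ge0 lerD2r -!natrX !ler_nat !leq_exp2r // le_ji.
Qed.

End Bnk.

Lemma coef_lin_exp (R : comNzRingType) (a b : R) m i :
  ((a%:P + b%:P * 'X) ^+ m)`_i = a ^+ (m - i) * b ^+ i *+ 'C(m, i).
Proof.
rewrite exprDn coef_sum.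
under eq_bigr => l _ do
  rewrite coefMn exprMn -!polyC_exp mulrA -polyCM coefCM coefXn mulr_natr -mulrnA.
have [lt_mi | le_im] := ltnP m i.
  rewrite bin_small // mulr0n big1 // => l _.
  by rewrite gtn_eqF ?mulr0n // (leq_trans (ltn_ord l) lt_mi).
rewrite (bigD1 (inord i)) //= inordK // eqxx mul1n big1 ?addr0 // => l.
by rewrite -val_eqE /= inordK // eq_sym => /negbTE->; rewrite mulr0n.
Qed.

(* Up to the sign (-1)^p, the value at [j] of the binary Krawtchouk polynomial
   of degree [p] and length [n]. *)
Definition krawtchouk (n p j : nat) : int :=
  ((1 - 'X) ^+ (n - j) * (1 + 'X) ^+ j : {poly int})`_p.

Lemma coef_krawtchouk (R : comNzRingType) n p j :
  ((1 - 'X) ^+ (n - j) * (1 + 'X) ^+ j : {poly R})`_p = (krawtchouk n p j)%:~R.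
Proof.
rewrite /krawtchouk -(coef_map (intr : int -> R)) rmorphM !rmorphXn /=.
by rewrite rmorphB rmorphD rmorph1 /= map_polyX.
Qed.

Lemma krawtchouk_gen (R : comNzRingType) n p (a b : R) :
  \sum_(j < n.+1) a ^+ (n - j) * b ^+ j *+ 'C(n, j) * (krawtchouk n p j)%:~R
  = (a + b) ^+ (n - p) * (b - a) ^+ p *+ 'C(n, p).
Proof.
have lin : a%:P * (1 - 'X) + b%:P * (1 + 'X) = (a + b)%:P + (b - a)%:P * 'X.
  by rewrite polyCB polyCD ?polyC1; ring.
rewrite -coef_lin_exp -lin exprDn coef_sum; apply: eq_bigr => j _.
by rewrite coefMn !exprMn -!polyC_exp mulrACA -polyCM coefCM coef_krawtchouk mulrnAl.
Qed.

Lemma eq_poly_ge (R : numDomainType) (a : R) (p q : {poly R}) :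
  (forall x, a <= x -> p.[x] = q.[x]) -> p = q.
Proof.
move=> eq_pq; apply/eqP; rewrite -subr_eq0; apply/negPn/negP => pq_neq0.
suff: (size (p - q)%R < size (p - q)%R)%N by rewrite ltnn.
rewrite -[X in (X < _)%N](size_iota 0) -(size_map (fun i : nat => a + i%:R)).
apply: max_poly_roots pq_neq0 _ _.
- apply/allP => _ /mapP[i _ ->]; apply/rootP.
  by rewrite hornerD hornerN eq_pq ?subrr // lerDl.
- by rewrite map_inj_uniq ?iota_uniq // => i j /addrI /eqP; rewrite eqr_nat => /eqP.
Qed.

Lemma joukowski_ge1 (R : rcfType) (x : R) : 1 <= x ->
  exists2 z : R, 0 < z & x = (z + z^-1) / 2.
Proof.
move=> x_ge1; set t := Num.sqrt (x ^+ 2 - 1).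
have t_ge0 : 0 <= t by apply: sqrtr_ge0.
have t2 : t ^+ 2 = x ^+ 2 - 1 by rewrite sqr_sqrtr // subr_ge0; nra.
have z_gt0 : 0 < x + t by lra.
exists (x + t) => //.
have -> : (x + t)^-1 = x - t.
  apply: (mulfI (lt0r_neq0 z_gt0)); rewrite mulfV ?lt0r_neq0 //.
  by move: t2; rewrite !expr2 => t2; nra.
lra.
Qed.

Lemma chebT_joukowski (R : numFieldType) (z : R) k : z != 0 ->
  (chebT k).[(z + z^-1) / 2] = (z ^+ k + z ^- k) / 2.
Proof.
move=> z_neq0; have two_neq0 : 2 != 0 :> R by rewrite pnatr_eq0.
suff: (chebT k).[(z + z^-1) / 2] = (z ^+ k + z ^- k) / 2 /\
      (chebT k.+1).[(z + z^-1) / 2] = (z ^+ k.+1 + z ^- k.+1) / 2 by case.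
elim: k => [|k [IHk IHk1]]; split=> //.
- by rewrite chebT0 hornerC expr0 invr1; field.
- by rewrite chebTS chebV0 chebT0 mulr0 addr0 mulr1 hornerX expr1.
rewrite chebT_rec hornerD hornerN hornerMn hornerM hornerX IHk IHk1.
have zk_neq0 : z ^+ k != 0 by rewrite expf_neq0.
by rewrite !exprS !invfM; field; rewrite zk_neq0.
Qed.

Lemma distn_double_le n j : (j <= n)%N -> (`|n - 2 * j| <= n)%N.
Proof.
move=> le_jn; case: (leqP (2 * j) n) => [le_2jn | /ltnW le_n2j].
  by rewrite distnEl //; lia.
by rewrite distnEr //; lia.
Qed.

Lemma chebT_dist_joukowski (R : numFieldType) (z : R) n j : z != 0 -> (j <= n)%N ->
  z ^+ n * (chebT `|n - 2 * j|).[(z + z^-1) / 2]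
  = ((z ^+ 2) ^+ (n - j) + (z ^+ 2) ^+ j) / 2.
Proof.
move=> z_neq0 le_jn; rewrite chebT_joukowski // -!exprM.
have [le_2jn | /ltnW le_n2j] := leqP (2 * j) n.
- have -> : z ^+ n = z ^+ (n - 2 * j) * z ^+ (2 * j) by rewrite -exprD subnK.
  rewrite distnEl // (_ : 2 * (n - j) = n - 2 * j + (n - 2 * j) + 2 * j)%N; last by lia.
  have ze_neq0 : z ^+ (n - 2 * j) != 0 by rewrite expf_neq0.
  by rewrite !exprD; field; rewrite ze_neq0.
- rewrite distnEr //.
  have -> : z ^+ (2 * j) = z ^+ (2 * (n - j)) * z ^+ (2 * j - n) * z ^+ (2 * j - n).
    by rewrite -!exprD; congr (_ ^+ _); lia.
  have -> : z ^+ n = z ^+ (2 * (n - j)) * z ^+ (2 * j - n).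
    by rewrite -exprD; congr (_ ^+ _); lia.
  have ze_neq0 : z ^+ (2 * j - n) != 0 by rewrite expf_neq0.
  by field; rewrite ze_neq0.
Qed.

Lemma zernikeR1 (R : numFieldType) n M : (zernikeR n M).[1] = 1 :> R.
Proof.
have half_sub1 : (2^-1 *: ('X - 1) : {poly R}).[1] = 0.
  by rewrite hornerZ hornerD hornerN hornerX -polyC1 hornerC subrr mulr0.
have half_add1 : (2^-1 *: ('X + 1) : {poly R}).[1] = 1.
  by rewrite hornerZ hornerD hornerX -polyC1 hornerC mulVf ?pnatr_eq0.
rewrite /zernikeR /jacobi hornerM hornerXn expr1n mul1r horner_comp.
have -> : (2 *: 'X ^+ 2 - 1 : {poly R}).[1] = 1.
  by rewrite hornerD hornerN hornerZ hornerXn -polyC1 hornerC expr1n mulr1; ring.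
rewrite horner_sum big_ord_recl big1 => [|s _].
  by rewrite hornerZ hornerM !horner_exp half_sub1 half_add1 !expr1n expr0 !mulr1
    addr0 /= subn0 addn0 binn bin0.
by rewrite hornerZ hornerM !horner_exp half_sub1 /= expr0n /= !mul0r mulr0.
Qed.

Definition zernike_coef {R : fieldType} (n p j : nat) : R :=
  'C(n, j)%:R * (krawtchouk n p j)%:~R ^+ 2 / (2 ^+ n * 'C(n, p)%:R).

Lemma zernike_coef_ge0 (R : realFieldType) n p j : 0 <= zernike_coef n p j :> R.
Proof. by apply: divr_ge0; apply: mulr_ge0; rewrite ?sqr_ge0 ?exprn_ge0 ?ler0n. Qed.

(* [zernikeW M p (z ^+ 2) = (2 z)^n R_n^M((z + z^-1)/2)] for [n = M + 2 p],
   see [zernikeR_joukowski]. *)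
Definition zernikeW {R : nzRingType} (M p : nat) (w : R) : R :=
  (w + 1) ^+ M * \sum_(s < p.+1)
    ('C(p, s) * 'C(p + M, s))%:R * (w - 1) ^+ (2 * s) * (w + 1) ^+ (2 * (p - s)).

Section Zernike.
Variables M p : nat.
Local Notation n := (M + 2 * p)%N.

(* The coefficient of [X^p] in [krawtchouk_gen] with [a = w (1 - X)], [b = 1 + X]. *)
Lemma krawtchouk_sqr_sum (R : comNzRingType) (w : R) :
  'C(n, p)%:R * zernikeW M p w
  = \sum_(j < n.+1) 'C(n, j)%:R * w ^+ (n - j) * (krawtchouk n p j)%:~R ^+ 2.
Proof.
have := congr1 (coefp p) (krawtchouk_gen n p (w%:P * (1 - 'X)) (1 + 'X)).
have sum_ab : w%:P * (1 - 'X) + (1 + 'X) = (w + 1)%:P + (1 - w)%:P * 'X.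
  by rewrite polyCB polyCD ?polyC1; ring.
have sub_ba : 1 + 'X - w%:P * (1 - 'X) = (1 - w)%:P + (w + 1)%:P * 'X.
  by rewrite polyCB polyCD ?polyC1; ring.
rewrite raddf_sum /= sum_ab sub_ba coefMn coefM.
under eq_bigr => j _.
  rewrite mulrzr coefMrz coefMn exprMn -polyC_exp -mulrA coefCM coef_krawtchouk.
  rewrite -mulrzr mulrnAl -mulrA -expr2 -mulr_natl mulrA.
  over.
move=> ->; rewrite mulr_natl; congr (_ *+ _).
rewrite /zernikeW mulr_sumr; apply: eq_bigr => i _.
have le_ip : (i <= p)%N by rewrite -ltnS.
rewrite !coef_lin_exp subKn // bin_sub //.
rewrite (_ : n - p - i = M + (p - i))%N; last by lia.
rewrite (_ : n - p = p + M)%N; last by lia.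
have -> : (w - 1) ^+ (2 * i) = (1 - w) ^+ (2 * i) by rewrite -opprB !exprM sqrrN.
by rewrite !mul2n -!addnn !exprD; ring.
Qed.

Lemma zernikeR_joukowski (R : numFieldType) (z : R) : z != 0 ->
  (2 * z) ^+ n * (zernikeR n M).[(z + z^-1) / 2] = zernikeW M p (z ^+ 2).
Proof.
move=> z_neq0; have two_neq0 : 2 != 0 :> R by rewrite pnatr_eq0.
rewrite /zernikeR /jacobi addKn mulKn // hornerM hornerXn horner_comp horner_sum.
set x := (z + z^-1) / 2.
have zx : 2 * z * x = z ^+ 2 + 1 by rewrite /x; field.
have -> : (2 *: 'X ^+ 2 - 1 : {poly R}).[x] = 2 * x ^+ 2 - 1.
  by rewrite hornerD hornerN hornerZ hornerXn -polyC1 hornerC.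
have y_sub1 : (2 * z) ^+ 2 * (2^-1 * (2 * x ^+ 2 - 1 - 1)) = (z ^+ 2 - 1) ^+ 2.
  by rewrite /x; field.
have y_add1 : (2 * z) ^+ 2 * (2^-1 * (2 * x ^+ 2 - 1 + 1)) = (z ^+ 2 + 1) ^+ 2.
  by rewrite /x; field.
rewrite exprD mulrACA -exprMn zx /zernikeW; congr (_ * _).
rewrite mulr_sumr; apply: eq_bigr => s _; have le_sp : (s <= p)%N by rewrite -ltnS.
rewrite addn0 bin_sub // hornerZ hornerM !horner_exp !hornerZ.
rewrite !(hornerD, hornerN, hornerX) -polyC1 !hornerC.
rewrite (_ : 2 * p = 2 * s + 2 * (p - s))%N; last by lia.
by rewrite exprD !exprM mulrCA mulrACA -!exprMn y_sub1 y_add1 -!exprM mulrA.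
Qed.

Lemma zernikeR_joukowski_coef (R : numFieldType) (z : R) : z != 0 ->
  z ^+ n * (zernikeR n M).[(z + z^-1) / 2]
  = \sum_(j < n.+1) zernike_coef n p j * (z ^+ 2) ^+ (n - j).
Proof.
move=> z_neq0.
have bin_neq0 : 'C(n, p)%:R != 0 :> R by rewrite pnatr_eq0 -lt0n bin_gt0; lia.
have pow2_neq0 : 2 ^+ n != 0 :> R by rewrite expf_neq0 ?pnatr_eq0.
have := zernikeR_joukowski z_neq0; rewrite exprMn => jouk.
transitivity ('C(n, p)%:R * zernikeW M p (z ^+ 2) / (2 ^+ n * 'C(n, p)%:R)).
  by rewrite -jouk; field; rewrite pow2_neq0 bin_neq0.
rewrite krawtchouk_sqr_sum mulr_suml; apply: eq_bigr => j _.
by rewrite /zernike_coef; ring.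
Qed.

Lemma zernikeR_joukowski_coef_rev (R : numFieldType) (z : R) : z != 0 ->
  z ^+ n * (zernikeR n M).[(z + z^-1) / 2]
  = \sum_(j < n.+1) zernike_coef n p j * (z ^+ 2) ^+ j.
Proof.
move=> z_neq0; have w_neq0 : z ^+ 2 != 0 by rewrite expf_neq0.
have := zernikeR_joukowski_coef (invr_neq0 z_neq0); rewrite invrK addrC => jouk.
have -> : z ^+ n = (z ^+ 2) ^+ n * z^-1 ^+ n.
  by rewrite -exprM mulnC exprM expr2 exprMn exprVn mulfK ?expf_neq0.
rewrite -mulrA jouk mulr_sumr; apply: eq_bigr => j _; rewrite mulrCA; congr (_ * _).
have le_jn : (j <= n)%N by rewrite -ltnS.
have -> : (z ^+ 2) ^+ n = (z ^+ 2) ^+ j * (z ^+ 2) ^+ (n - j) by rewrite -exprD subnKC.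
by rewrite !exprVn mulfK // expf_neq0.
Qed.

(* Averaging the two expansions in powers of [w = z ^+ 2] above yields, termwise,
   [z ^+ n] times [chebT `|n - 2 j|] at [x = (z + z^-1) / 2]. *)
Lemma zernikeR_chebT_expansion (R : rcfType) :
  zernikeR n M = \sum_(j < n.+1) zernike_coef n p j *: chebT (R := R) `|n - 2 * j|.
Proof.
have two_neq0 : 2 != 0 :> R by rewrite pnatr_eq0.
apply: (@eq_poly_ge _ 1) => _ /joukowski_ge1[z z_gt0 ->].
have z_neq0 := lt0r_neq0 z_gt0.
apply: (mulfI (expf_neq0 n z_neq0)); rewrite horner_sum mulr_sumr.
under eq_bigr => j _ do rewrite hornerZ mulrCA chebT_dist_joukowski // -1?ltnS //.
transitivity ((z ^+ n * (zernikeR n M).[(z + z^-1) / 2]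
               + z ^+ n * (zernikeR n M).[(z + z^-1) / 2]) / 2); first by field.
rewrite {1}zernikeR_joukowski_coef // zernikeR_joukowski_coef_rev //.
by rewrite -big_split mulr_suml; apply: eq_bigr => j _ /=; field.
Qed.

Lemma sum_zernike_coef (R : rcfType) : \sum_(j < n.+1) zernike_coef n p j = 1 :> R.
Proof.
have := congr1 (horner^~ 1) (zernikeR_chebT_expansion R).
rewrite zernikeR1 horner_sum => ->; apply: eq_bigr => j _.
by rewrite hornerZ horner_chebT1 mulr1.
Qed.

Lemma zernike_coef_ends (R : numFieldType) : (0 < n)%N ->
  zernike_coef n p 0 + zernike_coef n p n = a_coef n M :> R.
Proof.
move=> n_gt0.
have K0 : (krawtchouk n p 0)%:~R ^+ 2 = 'C(n, p)%:R ^+ 2 :> R.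
  rewrite -coef_krawtchouk subn0 expr0 mulr1.
  have -> : 1 - 'X = 1%:P + (-1)%:P * 'X :> {poly R} by rewrite polyCN mulN1r.
  rewrite coef_lin_exp expr1n mul1r -mulr_natr exprMn -exprM mulnC exprM sqrrN.
  by rewrite !expr1n mul1r.
have Kn : (krawtchouk n p n)%:~R ^+ 2 = 'C(n, p)%:R ^+ 2 :> R.
  rewrite -coef_krawtchouk subnn expr0 mul1r.
  have -> : 1 + 'X = 1%:P + 1%:P * 'X :> {poly R} by rewrite mul1r.
  by rewrite coef_lin_exp !expr1n mul1r.
have two_neq0 : 2 != 0 :> R by rewrite pnatr_eq0.
have bin_neq0 : 'C(n, p)%:R != 0 :> R by rewrite pnatr_eq0 -lt0n bin_gt0; lia.
rewrite /zernike_coef /a_coef K0 Kn bin0 binn addKn mulKn // exprVn.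
by field; rewrite expf_neq0 ?bin_neq0.
Qed.

End Zernike.

Theorem mainTheorem2 (R : realType) (n : nat) (m : int) (k : nat) :
  (1 <= n)%N -> (`|m| <= n)%N -> ~~ odd (n - `|m|)%N -> (1 <= k)%N ->
  let D := (zernikeR (R := R) n `|m|%N)^`(k) in
  (forall r : R, 0 <= r <= 1 -> `|D.[r]| <= `|D.[1]|) /\
  (a_coef n `|m|%N * Bnk n k <= D.[1] /\ D.[1] <= Bnk n k).
Proof.
move=> n_gt0 le_Mn even_nM _ D; set M := `|m|%N in le_Mn even_nM D *.
have [p n_eq] : exists p, n = (M + 2 * p)%N.
  exists (n - M)./2; have := odd_double_half (n - M).
  by rewrite (negbTE even_nM) add0n -mul2n; lia.
subst n; have expand := zernikeR_chebT_expansion M p R.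
have D_cone : cheb_cone D.
  rewrite /D expand; apply/cheb_cone_derivn/cheb_cone_sum => j.
  exact/cheb_coneZ/cheb_cone_chebT/zernike_coef_ge0.
have D1 : D.[1] = \sum_(j < (M + 2 * p).+1)
                    zernike_coef (M + 2 * p) p j * Bnk `|M + 2 * p - 2 * j| k.
  rewrite /D expand raddf_sum horner_sum; apply: eq_bigr => j _.
  by rewrite /= derivnZ hornerZ horner_derivn_chebT1.
split.
  move=> r /andP[r_ge0 r_le1]; apply: le_trans (ler_norm _).
  by apply: cheb_cone_norm_le => //; rewrite r_le1 andbT; lra.
split.
  have max_neq0 : ord_max != ord0 :> 'I_(M + 2 * p).+1 by rewrite -val_eqE /= -lt0n.
  have dist_max : `|M + 2 * p - 2 * (M + 2 * p)|%N = (M + 2 * p)%N.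
    by rewrite distnEr; lia.
  rewrite D1 (bigD1 ord0) // (bigD1 ord_max) //= addn0 dist_max.
  rewrite addrA -mulrDl zernike_coef_ends // lerDl sumr_ge0 // => j _.
  by rewrite mulr_ge0 ?zernike_coef_ge0 ?Bnk_ge0.
rewrite D1 -[leRHS]mul1r -(sum_zernike_coef M p R) mulr_suml.
apply: ler_sum => j _; apply: ler_wpM2l; first exact: zernike_coef_ge0.
by apply/Bnk_le/distn_double_le; rewrite -ltnS.
Qed.
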